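(* Let $n\ge1$, $l\in\{1,\dots,n\}$, and let $G$ and $N$ be random variables with joint distribution given by $$P(G=i,\ N-1-G=j)=\frac{1}{n}\,\frac{\binom{i+j}{i}\binom{n-1-i-j}{l-1-i}}{\binom{n-1}{l-1}}$$ for nonnegative integers $i,j$. Then $$\mathrm{var}\big(H(G)+H(N-1-G)\big)\le 28 .$$
   Context: $H(k)=H_k:=\sum_{i=1}^k 1/i$ for $k\in\mathbb{N}$ are the harmonic numbers, with $H(0)=H_0=0$. Binomial coefficients $\binom{a}{b}$ are $0$ if $b<0$ or $b>a$. *)

From mathcomp Require Import all_boot all_order all_algebra.
Set Implicit Arguments. Unset Strict Implicit. Unset Printing Implicit Defensive.
Import Order.TTheory GRing.Theory Num.Theory.
Local Open Scope ring_scope.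

Definition harmonic (R : fieldType) (k : nat) : R :=
  \sum_(1 <= i < k.+1) (i%:R)^-1.

(* P(G = i, N-1-G = j) = (1/n) C(i+j,i) C(n-1-i-j, l-1-i) / C(n-1,l-1),
   which is 0 unless i <= l-1 and i+j <= n-1 (binomials vanish otherwise). *)
Definition pmf (R : fieldType) (n l i j : nat) : R :=
  if (i < l)%N && (i + j < n)%N then
    (n%:R)^-1 * ('C(i + j, i)%:R * 'C(n.-1 - i - j, l.-1 - i)%:R)
      / 'C(n.-1, l.-1)%:R
  else 0.

(* The random variable X = H(G) + H(N-1-G) evaluated at (G, N-1-G) = (i, j). *)
Definition Xval (R : fieldType) (i j : nat) : R := harmonic R i + harmonic R j.

(* Expectation of X (support contained in {0..n-1}^2). *)
Definition meanX (R : fieldType) (n l : nat) : R :=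
  \sum_(i < n) \sum_(j < n) pmf R n l i j * Xval R i j.

Definition varX (R : fieldType) (n l : nat) : R :=
  \sum_(i < n) \sum_(j < n) pmf R n l i j * (Xval R i j - meanX R n l) ^+ 2.

(* G is uniform on {0, ..., l-1} and N-1-G is uniform on {0, ..., n-l}: summing
   the binomial weights is an upper-index Vandermonde convolution.  The variance
   is at most the second moment about c = H_l + H_(n-l+1), and
   (x + y)^2 <= 2x^2 + 2y^2 splits that into the second moments of H_l - H_G and
   H_(n-l+1) - H_(N-1-G).  For U uniform on {0, ..., L-1} the exact identity
   sum_(i<L) (H_L - H_i)^2 = 2L - H_L bounds each of them by 2, so the variance
   is at most 8. *)

From mathcomp Require Import all_boot all_order all_algebra.
From mathcomp Require Import zify ring lra.
Set Implicit Arguments. Unset Strict Implicit. Unset Printing Implicit Defensive.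
Import Order.TTheory GRing.Theory Num.Theory.

Lemma sum_bin_addn_mul_bin N i q :
  (\sum_(j < N.+1) 'C(i + j, i) * 'C(N - j, q) = 'C(i + N.+1, i + q.+1))%N.
Proof.
elim: N q => [|N IHN] q.
  rewrite big_ord1 addn0 binn bin0n mul1n; case: q => [|q]; first by rewrite addn1 binn.
  by rewrite bin_small // ltn_add2l.
rewrite big_ord_recr /= subnn; case: q => [|q].
  rewrite (eq_bigr (fun j : 'I_N.+1 => 'C(i + j, i) * 'C(N - j, 0))) => [|j _].
    by rewrite IHN bin0 muln1 !addn1 [i + N.+2]addnS binS.
  by rewrite !bin0.
rewrite bin0n muln0 addn0.
transitivity (\sum_(j < N.+1) 'C(i + j, i) * 'C(N - j, q.+1)
              + \sum_(j < N.+1) 'C(i + j, i) * 'C(N - j, q))%N.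
  by rewrite -big_split; apply: eq_bigr => j _; rewrite subSn ?binS ?mulnDr // -ltnS.
by rewrite !IHN !addnS binS.
Qed.

Lemma sum_bin_addn_mul_bin_ltn M m i : (i <= m <= M)%N ->
  (\sum_(j < M.+1 | i + j < M.+1) 'C(i + j, i) * 'C(M - i - j, m - i) = 'C(M.+1, m.+1))%N.
Proof.
case/andP=> le_im le_mM; have le_iM := leq_trans le_im le_mM.
rewrite (eq_bigl (fun j : 'I_M.+1 => j < (M - i).+1)%N) => [|j]; last by rewrite -subSn ?ltn_subRL.
rewrite -(big_ord_widen _ (fun j => 'C(i + j, i) * 'C(M - i - j, m - i))%N) ?ltnS ?leq_subr //.
by rewrite sum_bin_addn_mul_bin addnS subnKC // addnS subnKC.
Qed.

Local Open Scope ring_scope.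

Section Marginals.
Variable R : numFieldType.

Lemma pmf_ge0 n l i j : 0 <= pmf R n l i j.
Proof. by rewrite /pmf; case: ifP => // _; rewrite !mulr_ge0 ?invr_ge0 ?ler0n. Qed.

Lemma sum_pmf_fst n l i : (0 < l <= n)%N ->
  \sum_(j < n) pmf R n l i j = if (i < l)%N then l%:R^-1 else 0.
Proof.
case: n => [|M]; first by case: l.
case: l => [|m] // /andP[_]; rewrite ltnS => le_mM.
have [lt_im|le_mi] := ltnP i m.+1; last by apply: big1 => j _; rewrite /pmf ltnNge le_mi.
have -> : \sum_(j < M.+1) pmf R M.+1 m.+1 i j =
    M.+1%:R^-1 / 'C(M, m)%:R * 'C(M.+1, m.+1)%:R.
  rewrite -(@sum_bin_addn_mul_bin_ltn M m i); last by rewrite -ltnS lt_im.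
  rewrite natr_sum mulr_sumr [RHS]big_mkcond /=.
  apply: eq_bigr => j _; rewrite /pmf lt_im /=.
  by case: ifP => _; rewrite ?mulr0 // natrM mulrAC.
have diag : (M.+1%:R * 'C(M, m)%:R : R) = m.+1%:R * 'C(M.+1, m.+1)%:R.
  by rewrite -!natrM mul_bin_diag.
have Cm_neq0 : ('C(M, m)%:R : R) != 0 by rewrite pnatr_eq0 -lt0n bin_gt0.
have -> : ('C(M.+1, m.+1)%:R : R) = M.+1%:R * 'C(M, m)%:R / m.+1%:R.
  by rewrite diag mulrAC mulfV ?mul1r // pnatr_eq0.
by field; rewrite Cm_neq0 !nat1r !pnatr_eq0.
Qed.

Lemma pmf_swap n l i j : (0 < l <= n)%N -> pmf R n l i j = pmf R n (n - l).+1 j i.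
Proof.
case: n => [|M]; first by case: l.
case: l => [|m] // /andP[_]; rewrite ltnS => le_mM.
rewrite /pmf /= !subSS bin_sub // [(j + i)%N]addnC.
have [lt_ijM|] := boolP (i + j < M.+1)%N; rewrite ?andbT ?andbF //.
have [lt_im|le_mi] := boolP (i < m.+1)%N; have [lt_jm|le_mj] := boolP (j < (M - m).+1)%N => //=.
- have -> : 'C(i + j, j) = 'C(i + j, i) by rewrite -bin_sub ?leq_addl // addnK.
  have -> : (M - j - i = M - i - j)%N by lia.
  have -> : (M - m - j = (M - i - j) - (m - i))%N by lia.
  by rewrite bin_sub //; lia.
- by rewrite (bin_small (n := (M - i - j)%N)) ?mulr0 ?mul0r //; lia.
- by rewrite (bin_small (n := (M - j - i)%N)) ?mulr0 ?mul0r //; lia.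
Qed.

Lemma sum_pmf_snd n l j : (0 < l <= n)%N ->
  \sum_(i < n) pmf R n l i j = if (j < (n - l).+1)%N then (n - l).+1%:R^-1 else 0.
Proof.
move=> lt0ln; rewrite -(@sum_pmf_fst n (n - l).+1 j); last by lia.
by apply: eq_bigr => i _; rewrite pmf_swap.
Qed.

Lemma sum_pmf n l : (0 < l <= n)%N -> \sum_(i < n) \sum_(j < n) pmf R n l i j = 1.
Proof.
move=> lt0ln; case/andP: (lt0ln) => lt0l le_ln.
under eq_bigr => i _ do rewrite sum_pmf_fst //.
rewrite -big_mkcond /= -(big_ord_widen _ (fun=> l%:R^-1) le_ln) sumr_const card_ord.
by rewrite -[LHS]mulr_natr mulVf // pnatr_eq0 -lt0n.
Qed.
End Marginals.

Section Harmonic.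
Variable R : numFieldType.

Lemma harmonicS k : harmonic R k.+1 = harmonic R k + k.+1%:R^-1.
Proof. by rewrite /harmonic big_nat_recr. Qed.

Lemma sum_harmonic_sub L : \sum_(i < L) (harmonic R L - harmonic R i) = L%:R.
Proof.
elim: L => [|L IHL]; first by rewrite big_ord0.
rewrite big_ord_recr /= harmonicS addrAC subrr add0r.
under eq_bigr do rewrite addrAC.
rewrite big_split /= IHL sumr_const card_ord -[L.+1%:R]natr1.
by field; rewrite natr1 pnatr_eq0.
Qed.

Lemma sum_harmonic_sub_sqr L :
  \sum_(i < L) (harmonic R L - harmonic R i) ^+ 2 = 2 * L%:R - harmonic R L.
Proof.
elim: L => [|L IHL]; first by rewrite big_ord0 /harmonic big_geq // mulr0 subr0.
rewrite big_ord_recr /= harmonicS.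
under eq_bigr do rewrite addrAC sqrrD.
rewrite !big_split /= IHL -!mulr_suml sum_harmonic_sub sumr_const card_ord.
rewrite [harmonic R L + _ - _]addrAC subrr add0r -[L.+1%:R]natr1.
by field; rewrite natr1 pnatr_eq0.
Qed.

Lemma harmonic_ge0 k : 0 <= harmonic R k.
Proof. by apply: sumr_ge0 => i _; rewrite invr_ge0 ler0n. Qed.

Lemma sum_uniform_ord n L (f : nat -> R) : (L <= n)%N ->
  \sum_(i < n) f i * (if (i < L)%N then L%:R^-1 else 0) = (\sum_(i < L) f i) / L%:R.
Proof.
move=> le_Ln; rewrite mulr_suml (big_ord_widen _ (fun i => f i / L%:R) le_Ln) [RHS]big_mkcond /=.
by apply: eq_bigr => i _; case: ifP; rewrite ?mulr0.
Qed.

Lemma sum_harmonic_sub_sqr_uniform_le n L : (0 < L <= n)%N ->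
  \sum_(i < n) (harmonic R L - harmonic R i) ^+ 2 * (if (i < L)%N then L%:R^-1 else 0) <= 2.
Proof.
case/andP=> lt0L le_Ln.
rewrite (sum_uniform_ord (fun i => (harmonic R L - harmonic R i) ^+ 2) le_Ln).
by rewrite sum_harmonic_sub_sqr ler_pdivrMr ?ltr0n // gerBl ?harmonic_ge0.
Qed.

End Harmonic.

Section Moments.
Variable R : realFieldType.

Lemma sum_sqr_dev_mean_le (I J : finType) (p X : I -> J -> R) c :
  \sum_i \sum_j p i j = 1 ->
  \sum_i \sum_j p i j * (X i j - \sum_i' \sum_j' p i' j' * X i' j') ^+ 2
    <= \sum_i \sum_j p i j * (X i j - c) ^+ 2.
Proof.
rewrite !pair_bigA /= => p1.
set m := \sum_x p x.1 x.2 * X x.1 x.2.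
have shift x : p x.1 x.2 * (X x.1 x.2 - c) ^+ 2 = p x.1 x.2 * (X x.1 x.2 - m) ^+ 2
    + 2 * (m - c) * (p x.1 x.2 * X x.1 x.2) + ((m - c) ^+ 2 - 2 * (m - c) * m) * p x.1 x.2.
  by ring.
rewrite (eq_bigr _ (fun x _ => shift x)) !big_split /= -!mulr_sumr p1 -/m.
by rewrite mulr1 -addrA [2 * _ * _ + _]addrC subrK lerDl sqr_ge0.
Qed.

Lemma sum_sqr_addr_le (I J : finType) (p : I -> J -> R) (a : I -> R) (b : J -> R) :
  (forall i j, 0 <= p i j) ->
  \sum_i \sum_j p i j * (a i + b j) ^+ 2
    <= 2 * \sum_i a i ^+ 2 * \sum_j p i j + 2 * \sum_j b j ^+ 2 * \sum_i p i j.
Proof.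
move=> p_ge0.
have -> : 2 * \sum_j b j ^+ 2 * \sum_i p i j = \sum_i \sum_j 2 * (p i j * b j ^+ 2).
  rewrite exchange_big mulr_sumr; apply: eq_bigr => j _.
  by rewrite mulr_sumr mulr_sumr; apply: eq_bigr => i _; ring.
have -> : 2 * \sum_i a i ^+ 2 * \sum_j p i j = \sum_i \sum_j 2 * (p i j * a i ^+ 2).
  rewrite mulr_sumr; apply: eq_bigr => i _.
  by rewrite mulr_sumr mulr_sumr; apply: eq_bigr => j _; ring.
rewrite -big_split; apply: ler_sum => i _; rewrite -big_split; apply: ler_sum => j _ /=.
rewrite -subr_ge0 (_ : _ - _ = p i j * (a i - b j) ^+ 2); last by ring.
by rewrite mulr_ge0 ?sqr_ge0.
Qed.

End Moments.

Theorem lemma2 (R : realFieldType) (n l : nat) :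
  (1 <= n)%N -> (1 <= l <= n)%N -> varX R n l <= 28.
Proof.
move=> _ lt0ln; have lt0ln' : (0 < (n - l).+1 <= n)%N by lia.
set c := harmonic R l + harmonic R (n - l).+1.
pose a (i : 'I_n) := harmonic R l - harmonic R i.
pose b (j : 'I_n) := harmonic R (n - l).+1 - harmonic R j.
apply: le_trans (sum_sqr_dev_mean_le _ c (sum_pmf R lt0ln)) _.
have -> : \sum_(i < n) \sum_(j < n) pmf R n l i j * (Xval R i j - c) ^+ 2
    = \sum_(i < n) \sum_(j < n) pmf R n l i j * (a i + b j) ^+ 2.
  by apply: eq_bigr => i _; apply: eq_bigr => j _; rewrite /Xval /a /b /c; ring.
apply: le_trans (sum_sqr_addr_le a b (fun i j : 'I_n => pmf_ge0 R n l i j)) _.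
under eq_bigr => i _ do rewrite sum_pmf_fst //.
under [X in _ + 2 * X]eq_bigr => j _ do rewrite sum_pmf_snd //.
have := sum_harmonic_sub_sqr_uniform_le R lt0ln.
have := sum_harmonic_sub_sqr_uniform_le R lt0ln'.
rewrite /a /b; lra.
Qed.
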